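(* Let $H:B^{\mathbb{N}}\to B^{\mathbb{N}}$ be a one-sided CA with local rule $H(c)_i=H_l(c_i,c_{i+1})$ (neighborhood $\{0,1\}$) and a spreading state $q\in B$. Let $k\in\mathbb{N}$ with $k>\log_2|B|$, let $A=\{0,1,2\}^{2k}$ and let $F_{2k}:A^{\mathbb{N}}\to A^{\mathbb{N}}$ be the $2k$-fold Cartesian product of the CA $F$ on $\{0,1,2\}^{\mathbb{N}}$ defined by $F(c)_i=\rho_{c_{i+1}}(c_i)$, where $\rho_0=\rho_2$ is the permutation $0\mapsto0,1\mapsto2,2\mapsto1$ and $\rho_1$ is $0\mapsto1,1\mapsto2,2\mapsto0$. Define CA $\mathcal{F},\mathcal{G}$ on $(A\times B)^{\mathbb{N}}$ with neighborhood $\{0,1\}$ by $\mathcal{G}((a_0,b_0)(a_1,b_1))=(a_0,H_l(b_0,b_1))$ and $\mathcal{F}((a_0,b_0)(a_1,b_1))=(F_{2k}(a_0a_1),H_l(b_0,b_1))$ if $H_l(b_0,b_1)\neq q$, and $=(a_0,H_l(b_0,b_1))$ if $H_l(b_0,b_1)=q$ (here $F_{2k}(a_0a_1)$ denotes the local rule of $F_{2k}$ applied to $a_0,a_1$). Then: (1) if $H$ is not nilpotent, $h(\mathcal{F})>h(\mathcal{G})$; (2) if $H$ is nilpotent, $\mathcal{F}$ and $\mathcal{G}$ are strongly conjugate and $h(\mathcal{F})=h(\mathcal{G})=0$.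
   Context: A CA is a continuous shift-commuting self-map of a full shift $A^{\mathbb{N}}$ ($A$ finite), given by a local rule. A state $s$ is spreading if the local rule maps every neighborhood pattern containing $s$ to $s$. A CA $H$ is nilpotent if there is a state $q$ with $H({}^\omega q^\omega)={}^\omega q^\omega$ (the constant configuration) such that every configuration $c$ satisfies $H^n(c)={}^\omega q^\omega$ for some $n$. The $2k$-fold Cartesian product of $F$ acts coordinatewise on $(\{0,1,2\}^{2k})^{\mathbb{N}}$. $h$ denotes topological entropy ($\log_2$). Strong conjugacy: a homeomorphism $\phi$ with $\phi\mathcal{F}=\mathcal{G}\phi$ and $\phi\sigma=\sigma\phi$. *)

From Stdlib Require Import Reals ClassicalEpsilon.
From mathcomp Require Import all_boot.
Set Implicit Arguments. Unset Strict Implicit. Unset Printing Implicit Defensive.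

Definition config (T : Type) := nat -> T.

Definition ca_global (T : Type) (loc : T -> T -> T) (c : config T) : config T :=
  fun i => loc (c i) (c i.+1).

Definition shift (T : Type) (c : config T) : config T := fun i => c i.+1.

Definition spreading (B : Type) (Hl : B -> B -> B) (q : B) : Prop :=
  forall a b : B, (a = q \/ b = q) -> Hl a b = q.

Definition nilpotent (B : Type) (H : config B -> config B) : Prop :=
  exists q : B, (forall i, H (fun _ => q) i = q) /\
    forall c : config B, exists n, forall i, iter n H c i = q.

(* continuity for the product (Cantor) topology on T^N *)
Definition continuous_cfg (T U : Type) (phi : config T -> config U) : Prop :=
  forall (c : config T) (n : nat), exists m : nat, forall d : config T,
    (forall i, i < m -> d i = c i) -> forall i, i < n -> phi d i = phi c i.

Definition strongly_conjugate (T : Type) (F G : config T -> config T) : Prop :=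
  exists phi psi : config T -> config T,
    continuous_cfg phi /\ continuous_cfg psi /\
    (forall c i, psi (phi c) i = c i) /\ (forall c i, phi (psi c) i = c i) /\
    (forall c i, phi (F c) i = G (phi c) i) /\
    (forall c i, phi (shift c) i = shift (phi c) i).

Definition pbool (P : Prop) : bool :=
  if excluded_middle_informative P then true else false.

Definition orbit_pattern (T : finType) (Phi : config T -> config T) (k n : nat)
  (c : config T) : {ffun 'I_n * 'I_k -> T} :=
  [ffun p => iter (nat_of_ord p.1) Phi c (nat_of_ord p.2)].

Definition n_patterns (T : finType) (Phi : config T -> config T) (k n : nat) : nat :=
  #|[set p : {ffun 'I_n * 'I_k -> T} | pbool (exists c, orbit_pattern Phi k n c = p)]|.

Definition log2 (x : R) : R := Rdiv (ln x) (ln 2).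

(* Topological entropy (log base 2) of a CA on T^N, computed through the
   cylinder partitions: h = sup_k lim_n (1/n) log2 N(k,n). *)
Definition has_entropy (T : finType) (Phi : config T -> config T) (h : R) : Prop :=
  exists L : nat -> R,
    (forall k, Un_cv (fun n => Rdiv (log2 (INR (n_patterns Phi k n.+1))) (INR n.+1)) (L k))
    /\ is_lub (fun x => exists k, L k = x) h.

(* rho_s on {0,1,2}: rho_1 = (0 1 2), rho_0 = rho_2 = (1 2) *)
Definition rho (s x : 'I_3) : 'I_3 :=
  if nat_of_ord s == 1 then inord ((x + 1) %% 3) else inord ((3 - x) %% 3).

Definition F_loc (a0 a1 : 'I_3) : 'I_3 := rho a1 a0.

Definition alphA (k : nat) := {ffun 'I_(2 * k) -> 'I_3}.
Definition F2k_loc (k : nat) (a0 a1 : alphA k) : alphA k :=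
  [ffun j => F_loc (a0 j) (a1 j)].

Definition calG_loc (B : finType) (Hl : B -> B -> B) (k : nat)
  (x0 x1 : (alphA k * B)%type) : (alphA k * B)%type :=
  (x0.1, Hl x0.2 x1.2).

Definition calF_loc (B : finType) (Hl : B -> B -> B) (q : B) (k : nat)
  (x0 x1 : (alphA k * B)%type) : (alphA k * B)%type :=
  let b := Hl x0.2 x1.2 in
  if b == q then (x0.1, b) else (F2k_loc x0.1 x1.1, b).

From Stdlib Require Import Reals Lra Lia FunctionalExtensionality ClassicalEpsilon.
From mathcomp Require Import all_boot zify.
Set Implicit Arguments. Unset Strict Implicit. Unset Printing Implicit Defensive.

(* If H is nilpotent, then, q being spreading, a Koenig argument makes the
   nilpotency uniform: H^N0 sends every configuration to the constant q. From time
   N0 on calF freezes the A-layer, so c |-> (A-layer of calF^N0 c, B-layer of c)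
   conjugates calF to calG. This map is invertible because every rho_s is a
   permutation and whether a cell held a 1 can be read off its image under F
   (rho_s x = 2 iff x = 1). Both orbits are stationary after N0 steps, hence have
   entropy 0.

   If H is not nilpotent, Koenig's lemma gives a configuration b whose H-orbit
   never meets q, and above b calF acts on the A-layer as F_2k. A bit word written
   on the even cells of {0,1,2}^N reaches cell 0 under F at one bit per two steps,
   so a single column of F_2k records about k bits per step:
   h(calF) >= k > log2 |B| >= h(calG). Entropies exist by Fekete's lemma, since
   pattern counts are submultiplicative. *)

(** * Counting orbit patterns *)

Section OrbitPatterns.
Variables (T : finType) (Phi : config T -> config T).

Definition orbit_patterns k n :=
  [set p : {ffun 'I_n * 'I_k -> T} | pbool (exists c, orbit_pattern Phi k n c = p)].

Lemma mem_orbit_patterns k n p :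
  p \in orbit_patterns k n <-> exists c, orbit_pattern Phi k n c = p.
Proof. by rewrite inE /pbool; case: excluded_middle_informative. Qed.

Lemma n_patterns_gt0 (x0 : T) k n : 0 < n_patterns Phi k n.
Proof.
apply/card_gt0P; exists (orbit_pattern Phi k n (fun _ => x0)).
by apply/mem_orbit_patterns; exists (fun _ => x0).
Qed.

Lemma n_patterns_le_card (D : finType) (S : {set D}) k n
    (g : D -> {ffun 'I_n * 'I_k -> T}) :
  (forall c, exists2 w, w \in S & orbit_pattern Phi k n c = g w) ->
  n_patterns Phi k n <= #|S|.
Proof.
move=> cover; apply: leq_trans (leq_imset_card g S); apply: subset_leq_card.
apply/subsetP => _ /mem_orbit_patterns [c <-].
by have [w wS ->] := cover c; apply: imset_f.
Qed.

Lemma card_le_n_patterns (D : finType) k n (g : D -> {ffun 'I_n * 'I_k -> T}) :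
  injective g -> (forall w, exists c, orbit_pattern Phi k n c = g w) ->
  #|D| <= n_patterns Phi k n.
Proof.
move=> g_inj realized; rewrite -(card_imset (mem D) g_inj).
apply: subset_leq_card; apply/subsetP => _ /imsetP [w _ ->].
exact/mem_orbit_patterns/realized.
Qed.

Lemma n_patterns_le_window (x0 : T) k n w :
  (forall c d, (forall x, x < w -> c x = d x) ->
     orbit_pattern Phi k n c = orbit_pattern Phi k n d) ->
  n_patterns Phi k n <= #|T| ^ w.
Proof.
move=> window; rewrite -card_tuple -cardsT.
apply: (n_patterns_le_card
  (g := fun p : w.-tuple T => orbit_pattern Phi k n (fun x => nth x0 p x))) => c.
exists [tuple c (nat_of_ord j) | j < w]; rewrite ?inE //.
apply: window => x xw.
by rewrite -[x]/(nat_of_ord (Ordinal xw)) nth_mktuple.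
Qed.

Lemma n_patterns_submul k n m :
  n_patterns Phi k (n + m) <= n_patterns Phi k n * n_patterns Phi k m.
Proof.
pose split_pattern (p : {ffun 'I_(n + m) * 'I_k -> T}) :=
  (([ffun x : 'I_n * 'I_k => p (lshift m x.1, x.2)] : {ffun 'I_n * 'I_k -> T}),
   ([ffun x : 'I_m * 'I_k => p (rshift n x.1, x.2)] : {ffun 'I_m * 'I_k -> T})).
have split_inj : injective split_pattern.
  move=> p1 p2 [e1 e2]; apply/ffunP => -[i j].
  case: (splitP i) => [a ia | b ib].
    rewrite (_ : i = lshift m a); last exact: val_inj.
    by have := congr1 (fun f : {ffun 'I_n * 'I_k -> T} => f (a, j)) e1; rewrite !ffunE.
  rewrite (_ : i = rshift n b); last exact: val_inj.
  by have := congr1 (fun f : {ffun 'I_m * 'I_k -> T} => f (b, j)) e2; rewrite !ffunE.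
rewrite /n_patterns -/(orbit_patterns _ _) -(card_imset _ split_inj) -cardsX.
apply: subset_leq_card; apply/subsetP => _ /imsetP [_ /mem_orbit_patterns [c <-] ->].
apply/setXP; split; apply/mem_orbit_patterns.
  by exists c; apply/ffunP => x; rewrite !ffunE.
by exists (iter n Phi c); apply/ffunP => x; rewrite !ffunE /= -iterD addnC.
Qed.

End OrbitPatterns.

Section CellularAutomata.
Variables (T : Type) (loc : T -> T -> T).
Local Notation Phi := (ca_global loc).

Lemma iter_ca_succ t c i :
  iter t.+1 Phi c i = loc (iter t Phi c i) (iter t Phi c i.+1).
Proof. by []. Qed.

Lemma iter_ca_local t c d i : (forall x, i <= x <= i + t -> c x = d x) ->
  iter t Phi c i = iter t Phi d i.
Proof.
elim: t i => [|t IH] i cd; first by apply: cd; rewrite addn0 leqnn.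
by rewrite !iter_ca_succ (IH i) ?(IH i.+1) // => x /andP[? ?]; apply: cd; lia.
Qed.

Lemma iter_ca_translate t m c j :
  iter t Phi (fun x => c (x + m)) j = iter t Phi c (j + m).
Proof. by elim: t j => [|t IH] j //; rewrite !iter_ca_succ !IH. Qed.

Lemma iter_ca_shift t c j : iter t Phi (shift c) j = iter t Phi c j.+1.
Proof.
have -> : shift c = (fun x => c (x + 1)).
  by apply: functional_extensionality => x; rewrite addn1.
by rewrite iter_ca_translate addn1.
Qed.

End CellularAutomata.

(** * Fekete's lemma and logarithms *)

Section RealSequences.
Local Open Scope R_scope.

Lemma INR_succ_gt0 n : 0 < INR n.+1.
Proof. exact/lt_0_INR/ltP. Qed.

Lemma INR_expn a b : INR (a ^ b)%N = INR a ^ b.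
Proof. by elim: b => [|b IH] //; rewrite expnS mult_INR IH. Qed.

Lemma cv_const a : Un_cv (fun _ => a) a.
Proof. by move=> eps eps_gt0; exists 0%N => n _; rewrite /R_dist Rminus_diag Rabs_R0. Qed.

Lemma cv_div_INR_succ C : Un_cv (fun n => C / INR n.+1) 0.
Proof.
have -> : (fun n => C / INR n.+1) = (fun n => C * RinvN n).
  by apply: functional_extensionality => n; rewrite S_INR.
by rewrite -(Rmult_0_r C); apply: CV_mult (cv_const C) RinvN_cv.
Qed.

Lemma cv_le_of_le_add_div (u : nat -> R) l a C :
  Un_cv u l -> (forall n, u n <= a + C / INR n.+1) -> l <= a.
Proof.
move=> cu u_le; apply: Rle_cv_lim u_le cu _.
by rewrite -{2}(Rplus_0_r a); apply: CV_plus (cv_const a) (cv_div_INR_succ C).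
Qed.

Lemma cv_ge_of_ge (u : nat -> R) l a : Un_cv u l -> (forall n, a <= u n) -> a <= l.
Proof. by move=> cu u_ge; apply: Rle_cv_lim u_ge (cv_const a) cu. Qed.

Lemma cv_of_le_terms (u : nat -> R) : (forall n, 0 <= u n) ->
  (forall m, exists C, forall n, u n <= u m + C / INR n.+1) -> exists l, Un_cv u l.
Proof.
move=> u_ge0 u_le.
have [M [M_ub M_lub]] : {M | is_lub (fun x => exists n, x = - u n) M}.
  apply: completeness; last by exists (- u 0%N), 0%N.
  by exists 0 => _ [n ->]; have := u_ge0 n; lra.
exists (- M) => eps eps_gt0.
have [m um] : exists m, u m < - M + eps / 2.
  apply: NNPP => no_m; suff : M <= M - eps / 2 by lra.
  apply: M_lub => _ [n ->]; apply: Rnot_lt_le => un; apply: no_m; exists n; lra.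
have [C u_leC] := u_le m.
have [N CN] := @cv_div_INR_succ C (eps / 2) ltac:(lra).
exists N => n nN; have := CN n nN; have := u_leC n; have := M_ub _ (ex_intro _ n erefl).
rewrite /R_dist Rminus_0_r => ? ? /Rabs_def2 [? ?]; apply: Rabs_def1; lra.
Qed.

Definition subadditive (f : nat -> R) := forall n m, f (n + m)%N <= f n + f m.

Section Fekete.
Variable f : nat -> R.
Hypotheses (f_sub : subadditive f) (f_ge0 : forall n, 0 <= f n).

Lemma subadditive_mul q m : f (q * m)%N <= f 0%N + INR q * f m.
Proof.
elim: q => [|q IH]; first by rewrite mul0n /=; lra.
by rewrite mulSn; apply: (Rle_trans _ _ _ (f_sub _ _)); rewrite S_INR; lra.
Qed.

Lemma fekete_bound m n :
  f n.+1 / INR n.+1 <= f m.+1 / INR m.+1 + (2 * f 0%N + INR m.+1 * f 1%N) / INR n.+1.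
Proof.
set M := m.+1; set N := n.+1; set C := 2 * f 0%N + INR M * f 1%N.
have M_gt0 : 0 < INR M := INR_succ_gt0 m.
have N_gt0 : 0 < INR N := INR_succ_gt0 n.
have N_eq : N = (N %/ M * M + N %% M)%N by apply: divn_eq.
have r_lt : (N %% M < M)%N by apply: ltn_pmod.
set qt := (N %/ M)%N in N_eq *; set r := (N %% M)%N in N_eq r_lt *.
have fN_le : f N <= C + INR qt * f M.
  rewrite [in f N]N_eq; apply: (Rle_trans _ _ _ (f_sub _ _)).
  have := subadditive_mul qt M; have := subadditive_mul r 1; rewrite muln1.
  have : INR r <= INR M by apply/le_INR/leP/ltnW.
  by have := f_ge0 1; rewrite /C; nra.
have qM_le : INR qt * INR M <= INR N.
  by rewrite -mult_INR; apply/le_INR/leP; rewrite [X in (_ <= X)%N]N_eq leq_addr.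
have M_neq0 := Rgt_not_eq _ _ M_gt0; have N_neq0 := Rgt_not_eq _ _ N_gt0.
have -> : f N / INR N = f N * INR M / (INR N * INR M) by field.
have -> : f M / INR M = f M * INR N / (INR N * INR M) by field.
have -> : C / INR N = C * INR M / (INR N * INR M) by field.
rewrite -Rdiv_plus_distr; apply: Rmult_le_compat_r.
  by apply/Rlt_le/Rinv_0_lt_compat/Rmult_lt_0_compat.
have := Rmult_le_compat_r _ _ _ (Rlt_le _ _ M_gt0) fN_le.
have := Rmult_le_compat_r _ _ _ (f_ge0 M) qM_le.
nra.
Qed.

Lemma fekete : exists l, Un_cv (fun n => f n.+1 / INR n.+1) l.
Proof.
apply: cv_of_le_terms => [n | m]; first exact: Rle_mult_inv_pos (f_ge0 _) (INR_succ_gt0 n).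
by exists (2 * f 0%N + INR m.+1 * f 1%N); apply: fekete_bound.
Qed.

End Fekete.

Lemma log2_le x y : 0 < x -> x <= y -> log2 x <= log2 y.
Proof.
move=> x_gt0 [xy | ->]; last exact: Rle_refl.
apply: Rmult_le_compat_r; first by apply/Rlt_le/Rinv_0_lt_compat; have := ln_lt_2; lra.
exact/Rlt_le/ln_increasing.
Qed.

Lemma log2_mul x y : 0 < x -> 0 < y -> log2 (x * y) = log2 x + log2 y.
Proof. by move=> x_gt0 y_gt0; rewrite /log2 ln_mult // Rdiv_plus_distr. Qed.

Lemma log2_pow x n : 0 < x -> log2 (x ^ n) = INR n * log2 x.
Proof. by move=> x_gt0; rewrite /log2 ln_pow // /Rdiv Rmult_assoc. Qed.

Lemma log2_1 : log2 1 = 0.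
Proof. by rewrite /log2 ln_1 /Rdiv Rmult_0_l. Qed.

Lemma log2_2 : log2 2 = 1.
Proof. by rewrite /log2 /Rdiv Rinv_r //; have := ln_lt_2; lra. Qed.

Lemma log2_INR_ge0 N : (0 < N)%N -> 0 <= log2 (INR N).
Proof. by move=> N_gt0; rewrite -log2_1; apply: log2_le; [lra | apply/(le_INR 1)/leP]. Qed.

End RealSequences.

(** * Entropy from pattern counts *)

Section Entropy.
Variables (T : finType) (Phi : config T -> config T) (x0 : T).
Local Open Scope R_scope.

Definition pattern_rate k n := log2 (INR (n_patterns Phi k n.+1)) / INR n.+1.

Lemma n_patterns_INR_gt0 k n : 0 < INR (n_patterns Phi k n).
Proof. exact/lt_0_INR/ltP/(n_patterns_gt0 Phi x0). Qed.

Lemma pattern_rate_cv k : exists l, Un_cv (pattern_rate k) l.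
Proof.
apply: (fekete (f := fun n => log2 (INR (n_patterns Phi k n)))) => [n m | n].
  rewrite -log2_mul; try exact: n_patterns_INR_gt0.
  apply: log2_le; first exact: n_patterns_INR_gt0.
  by rewrite -mult_INR; apply/le_INR/leP/n_patterns_submul.
by apply: log2_INR_ge0; exact: (n_patterns_gt0 Phi x0 k n).
Qed.

Lemma log2_INR_mul_expn c b n : (0 < c)%N -> (0 < b)%N ->
  log2 (INR (c * b ^ n)) = log2 (INR c) + INR n * log2 (INR b).
Proof.
move=> /ltP/lt_0_INR c_pos /ltP/lt_0_INR b_pos.
by rewrite mult_INR INR_expn log2_mul ?log2_pow //; apply: pow_lt.
Qed.

Lemma pattern_rate_limit_le k c b l :
  (forall n, n_patterns Phi k n <= c * b ^ n)%N -> Un_cv (pattern_rate k) l ->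
  l <= log2 (INR b).
Proof.
move=> bound cv; apply: (cv_le_of_le_add_div (C := log2 (INR c))) cv _ => n.
have := leq_trans (n_patterns_gt0 Phi x0 k n.+1) (bound n.+1).
rewrite muln_gt0 expn_gt0 orbF => /andP[c_gt0 b_gt0].
have n_gt0 := INR_succ_gt0 n.
apply: (Rle_trans _ (log2 (INR (c * b ^ n.+1)) / INR n.+1)).
  apply: Rmult_le_compat_r; first exact/Rlt_le/Rinv_0_lt_compat.
  by apply: log2_le; [exact: n_patterns_INR_gt0 | exact/le_INR/leP].
by rewrite log2_INR_mul_expn //; apply: Req_le; field; apply: Rgt_not_eq.
Qed.

Lemma pattern_rate_limit_ge k b l : (0 < b)%N ->
  (forall n, b ^ n.+1 <= n_patterns Phi k n.+1)%N -> Un_cv (pattern_rate k) l ->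
  log2 (INR b) <= l.
Proof.
move=> b_gt0 bound cv; apply: cv_ge_of_ge cv _ => n.
have n_gt0 := INR_succ_gt0 n.
have -> : log2 (INR b) = log2 (INR (1 * b ^ n.+1)) / INR n.+1.
  by rewrite log2_INR_mul_expn // log2_1 Rplus_0_l; field; apply: Rgt_not_eq.
apply: Rmult_le_compat_r; first exact/Rlt_le/Rinv_0_lt_compat.
apply: log2_le; last by rewrite mul1n; apply/le_INR/leP.
by rewrite mul1n INR_expn; apply: pow_lt; apply/lt_0_INR/ltP.
Qed.

Lemma has_entropy_le h b : has_entropy Phi h ->
  (forall k, exists c, forall n, n_patterns Phi k n <= c * b ^ n)%N ->
  h <= log2 (INR b).
Proof.
move=> [L [cvL lubL]] bound; apply: (proj2 lubL) => _ [k <-].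
by have [c ck] := bound k; apply: pattern_rate_limit_le ck (cvL k).
Qed.

Lemma has_entropy_ge h k b : (0 < b)%N -> has_entropy Phi h ->
  (forall n, b ^ n.+1 <= n_patterns Phi k n.+1)%N -> log2 (INR b) <= h.
Proof.
move=> b_gt0 [L [cvL lubL]] bound.
apply: (Rle_trans _ _ _ _ (proj1 lubL _ (ex_intro _ k erefl))).
exact: pattern_rate_limit_ge b_gt0 bound (cvL k).
Qed.

Lemma has_entropy_exists b :
  (forall k, exists c, forall n, n_patterns Phi k n <= c * b ^ n)%N ->
  exists h, has_entropy Phi h.
Proof.
move=> bound.
pose L k := proj1_sig (constructive_indefinite_description _ (pattern_rate_cv k)).
have cvL k : Un_cv (pattern_rate k) (L k).
  exact: proj2_sig (constructive_indefinite_description _ (pattern_rate_cv k)).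
have [h h_lub] : {h | is_lub (fun x => exists k, L k = x) h}.
  apply: completeness; last by exists (L 0%N), 0%N.
  exists (log2 (INR b)) => _ [k <-].
  by have [c ck] := bound k; apply: pattern_rate_limit_le ck (cvL k).
by exists h, L.
Qed.

End Entropy.

Section CAEntropy.
Variables (T : finType) (loc : T -> T -> T) (x0 : T).
Local Notation Phi := (ca_global loc).
Local Open Scope R_scope.

Lemma n_patterns_ca_le k n : (n_patterns Phi k n <= #|T| ^ k * #|T| ^ n)%N.
Proof.
rewrite -expnD; apply: (n_patterns_le_window x0) => c d cd.
apply/ffunP => -[t i]; rewrite !ffunE /=; apply: iter_ca_local => x xi.
by apply: cd; have := ltn_ord t; have := ltn_ord i; lia.
Qed.

Lemma ca_has_entropy : exists h, has_entropy Phi h.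
Proof.
by apply: (has_entropy_exists x0 (b := #|T|)) => k; exists (#|T| ^ k)%N; apply: n_patterns_ca_le.
Qed.

Lemma ca_has_entropy0 N0 :
  (forall c t i, iter (N0 + t) Phi c i = iter N0 Phi c i) -> has_entropy Phi 0.
Proof.
move=> stable.
have iter_min c t i : iter t Phi c i = iter (minn t N0) Phi c i.
  have [// | /ltnW N0t] := leqP t N0.
  by rewrite -(subnKC N0t) stable.
have bounded k : exists c, forall n, (n_patterns Phi k n <= c * 1 ^ n)%N.
  exists (#|T| ^ (k + N0))%N => n; rewrite exp1n muln1.
  apply: (n_patterns_le_window x0) => c d cd; apply/ffunP => -[t i].
  rewrite !ffunE /= iter_min [RHS]iter_min; apply: iter_ca_local => x xi.
  by apply: cd; have := ltn_ord i; have := geq_minr t N0; lia.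
have [h hh] := has_entropy_exists x0 bounded.
suff h0 : h = 0 by rewrite -h0.
apply: Rle_antisym; first by rewrite -log2_1; apply: has_entropy_le hh bounded.
rewrite -log2_1; apply: (has_entropy_ge (k := 0%N) (b := 1%N) isT hh) => n.
by rewrite exp1n; exact: (n_patterns_gt0 Phi x0 0 n.+1).
Qed.

End CAEntropy.

(** * Nilpotency in the presence of a spreading state *)

Section SpreadingState.
Variables (B : finType) (Hl : B -> B -> B) (q : B).
Hypothesis Hspread : spreading Hl q.
Local Notation H := (ca_global Hl).

Lemma iter_ca_spreading_const t i : iter t H (fun _ => q) i = q.
Proof. by elim: t i => [|t IH] i //; rewrite iter_ca_succ !IH; apply: Hspread; left. Qed.

Lemma iter_ca_spreading_mono s t c i :
  s <= t -> iter s H c i = q -> iter t H c i = q.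
Proof.
move=> /subnKC <- ciq; elim: (t - s) => [|m IH]; first by rewrite addn0.
by rewrite addnS iter_ca_succ IH; apply: Hspread; left.
Qed.

Lemma iter_ca_spreading_cone s m c j x :
  j <= x <= j + m -> iter s H c x = q -> iter (s + m) H c j = q.
Proof.
elim: m j => [|m IH] j jx cxq.
  by rewrite addn0 (_ : j = x) //; lia.
have [-> | j_neq_x] := eqVneq j x; first exact: iter_ca_spreading_mono (leq_addr _ _) cxq.
rewrite addnS iter_ca_succ (IH j.+1) //; last by lia.
by apply: Hspread; right.
Qed.

Definition avoids_q_on_triangle (d : config B) N :=
  forall s j, s + j <= N -> iter s H d j <> q.

Definition extends (p : seq B) (d : config B) :=
  forall i, i < size p -> d i = nth q p i.

Definition extendable (p : seq B) :=
  forall N, exists2 d, extends p d & avoids_q_on_triangle d N.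

Lemma extendable_nil :
  (forall N, exists c i, iter N H c i <> q) -> extendable [::].
Proof.
move=> unbounded N; have [c [i ciq]] := unbounded N.
exists (fun x => c (x + i)) => // s j sjN djq; apply: ciq.
rewrite -(subnKC (leq_trans (leq_addr j s) sjN)) -[i]add0n -iter_ca_translate.
by apply: (iter_ca_spreading_cone (x := j)) djq; lia.
Qed.

Lemma extendable_rcons p : extendable p -> exists x, extendable (rcons p x).
Proof.
move=> p_ext; apply: NNPP => no_ext.
have bound x : exists N, forall d, extends (rcons p x) d -> ~ avoids_q_on_triangle d N.
  apply: NNPP => x_ext; apply: no_ext; exists x => N.
  apply: NNPP => noN; apply: x_ext; exists N => d dx davoid.
  by apply: noN; exists d.
have [N bounded] : exists N : B -> nat,
    forall x d, extends (rcons p x) d -> ~ avoids_q_on_triangle d (N x).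
  exists (fun x => proj1_sig (constructive_indefinite_description _ (bound x))) => x.
  exact: proj2_sig (constructive_indefinite_description _ (bound x)).
have [d pd davoid] := p_ext (\max_x N x).
apply: (bounded (d (size p)) d).
  move=> i; rewrite size_rcons ltnS leq_eqVlt nth_rcons => /orP[/eqP-> | ip].
    by rewrite ltnn eqxx.
  by rewrite ip pd.
move=> s j sjN; apply: davoid; apply: leq_trans sjN _.
exact: (leq_bigmax_cond (d (size p))).
Qed.

Lemma avoiding_orbit_of_extendable :
  extendable [::] -> exists b, forall s j, iter s H b j <> q.
Proof.
move=> ext_nil.
pose next p := epsilon (inhabits q) (fun x => extendable (rcons p x)).
have ext_next p : extendable p -> extendable (rcons p (next p)).
  by move=> /extendable_rcons; apply: epsilon_spec.
pose fix pre n := if n is n'.+1 then rcons (pre n') (next (pre n')) else [::].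
have ext_pre n : extendable (pre n) by elim: n => [|n IH] //=; apply: ext_next.
have size_pre n : size (pre n) = n by elim: n => [|n IH] //=; rewrite size_rcons IH.
have nth_pre n m i : i < n <= m -> nth q (pre m) i = nth q (pre n) i.
  move=> /andP[i_n]; elim: m => [|m IH] nm; first by lia.
  have [nm' | /eqP n_eq] := boolP (n <= m); last by have -> : n = m.+1 by lia.
  by rewrite /= nth_rcons size_pre (leq_trans i_n nm') IH.
exists (fun i => nth q (pre i.+1) i) => s j.
have [d pd davoid] := ext_pre (s + j).+1 (s + j).
rewrite (@iter_ca_local _ _ s _ d); first exact: davoid.
move=> x xsj; rewrite pd ?size_pre; last by lia.
by rewrite (nth_pre x.+1 (s + j).+1) //; lia.
Qed.

Lemma avoiding_orbit_of_unbounded :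
  (forall N, exists c i, iter N H c i <> q) -> exists b, forall s j, iter s H b j <> q.
Proof. by move=> /extendable_nil; apply: avoiding_orbit_of_extendable. Qed.

Lemma nilpotent_uniform : nilpotent H -> exists N0, forall c i, iter N0 H c i = q.
Proof.
move=> [q' [_ nil]].
have q'q : q' = q.
  by have [n cq] := nil (fun _ => q); rewrite -(cq 0) iter_ca_spreading_const.
subst q'.
apply: NNPP => nonuniform.
have [b bavoid] : exists b, forall s j, iter s H b j <> q.
  apply: avoiding_orbit_of_unbounded => N; apply: NNPP => allq; apply: nonuniform.
  by exists N => c i; apply: NNPP => ciq; apply: allq; exists c, i.
by have [n bq] := nil b; apply: (bavoid n 0).
Qed.

Lemma not_nilpotent_avoiding_orbit :
  ~ nilpotent H -> exists b, forall s j, iter s H b j <> q.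
Proof.
move=> not_nil; apply: avoiding_orbit_of_unbounded => N; apply: NNPP => allq.
apply: not_nil; exists q; split=> [i | c]; first by apply: Hspread; left.
by exists N => i; apply: NNPP => ciq; apply: allq; exists c, i.
Qed.

End SpreadingState.

(** * The automaton F on three symbols *)

Definition is1 (x : 'I_3) : bool := nat_of_ord x == 1.

(* [rho s] only depends on whether [s] is 1 *)
Definition rhob (b : bool) (x : 'I_3) : 'I_3 :=
  if b then inord ((x + 1) %% 3) else inord ((3 - x) %% 3).

Definition rhob_inv (b : bool) (y : 'I_3) : 'I_3 :=
  if b then inord ((y + 2) %% 3) else inord ((3 - y) %% 3).

Lemma rhoE s x : rho s x = rhob (is1 s) x.
Proof. by []. Qed.

Lemma rhobK b : cancel (rhob b) (rhob_inv b).
Proof. by case: b => -[[|[|[|//]]] ?]; apply/val_inj; rewrite /rhob /rhob_inv /= ?inordK. Qed.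

Lemma rhob_invK b : cancel (rhob_inv b) (rhob b).
Proof. by case: b => -[[|[|[|//]]] ?]; apply/val_inj; rewrite /rhob /rhob_inv /= ?inordK. Qed.

Lemma rhob_eq2 b x : (nat_of_ord (rhob b x) == 2) = is1 x.
Proof. by case: b; case: x => [[|[|[|//]]] ?]; rewrite /rhob /is1 /= ?inordK. Qed.

Lemma is1_rhob_eq b b' x : ~~ is1 x -> (is1 (rhob b x) == is1 (rhob b' x)) = (b == b').
Proof. by case: b; case: b'; case: x => [[|[|[|//]]] ?]; rewrite /rhob /is1 /= ?inordK. Qed.

Lemma is1_rhob_false x : nat_of_ord x != 2 -> ~~ is1 (rhob false x).
Proof. by case: x => [[|[|[|//]]] ?]; rewrite /rhob /is1 /= ?inordK. Qed.

Section SingleF.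
Local Notation FG := (ca_global F_loc).

Lemma iter_F_succ t c i :
  iter t.+1 FG c i = rhob (is1 (iter t FG c i.+1)) (iter t FG c i).
Proof. by []. Qed.

Definition parity_config (c : config 'I_3) :=
  forall i, if odd i then ~~ is1 (c i) else nat_of_ord (c i) != 2.

Lemma iter_F_parity c : parity_config c -> forall m i,
  if odd (i + m) then ~~ is1 (iter m FG c i) else nat_of_ord (iter m FG c i) != 2.
Proof.
move=> c_par; elim=> [|m IH] i; first by rewrite addn0; apply: c_par.
rewrite iter_F_succ addnS /=; have := IH i; have := IH i.+1; rewrite addSn /=.
case: (odd (i + m)) => /= [_ not1 | not1 not2]; first by rewrite rhob_eq2.
by rewrite (negbTE not1); apply: is1_rhob_false.
Qed.

(* The difference travels left one cell per step: by parity the cell to its left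
   is never 1, and there [rhob _ x] tells the two selector bits apart. *)
Lemma iter_F_first_difference c c' t :
  parity_config c -> parity_config c' -> ~~ odd t ->
  (forall x, x < t -> c x = c' x) -> is1 (c t) != is1 (c' t) ->
  iter t FG c 0 != iter t FG c' 0.
Proof.
move=> c_par c'_par t_even agree differ.
suff diff_k k : k <= t -> is1 (iter k FG c (t - k)) != is1 (iter k FG c' (t - k)).
  by apply: contra (diff_k t (leqnn t)); rewrite subnn => /eqP->.
elim: k => [|k IH] kt; first by rewrite subn0.
have /IH : k <= t by lia.
have -> : t - k = (t - k.+1).+1 by lia.
rewrite !iter_F_succ => IHk.
have -> : iter k FG c (t - k.+1) = iter k FG c' (t - k.+1).
  by apply: iter_ca_local => x xk; apply: agree; lia.
rewrite is1_rhob_eq //.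
have t_gt0 : 0 < t by lia.
have := iter_F_parity c'_par k (t - k.+1).
rewrite (_ : t - k.+1 + k = t.-1); last by lia.
by move: t_even; rewrite -[t in odd t](prednK t_gt0) /= negbK => ->.
Qed.

Definition bitc (s : seq bool) : config 'I_3 :=
  fun i => if odd i then ord0 else if nth false s i./2 then inord 1 else ord0.

Lemma bitc_parity s : parity_config (bitc s).
Proof. by move=> i; rewrite /bitc /is1; case: (odd i) => //; case: ifP; rewrite ?inordK. Qed.

Lemma bitc_orbits_differ (s s' : seq bool) m :
  (forall l, l < m -> nth false s l = nth false s' l) ->
  nth false s m != nth false s' m ->
  iter m.*2 FG (bitc s) 0 != iter m.*2 FG (bitc s') 0.
Proof.
move=> agree differ.
apply: iter_F_first_difference; try exact: bitc_parity.
- by rewrite odd_double.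
- move=> x xm; rewrite /bitc; case: (odd x) => //.
  by rewrite agree // ltn_half_double.
- rewrite /bitc odd_double doubleK /is1.
  by move: differ; case: (nth false s m); case: (nth false s' m); rewrite ?inordK.
Qed.

Lemma bitc_tuples_orbits_differ n (s s' : n.-tuple bool) : s != s' ->
  exists2 m, m < n & iter m.*2 FG (bitc s) 0 != iter m.*2 FG (bitc s') 0.
Proof.
move=> ss'.
have ex_diff : exists m, (m < n) && (nth false s m != nth false s' m).
  apply: NNPP => no_diff; move/eqP: ss'; apply; apply: val_inj.
  apply: (@eq_from_nth _ false); rewrite ?size_tuple // => i i_lt.
  apply/eqP; apply: contraT => differ; exfalso.
  by apply: no_diff; exists i; rewrite i_lt.
case: (ex_minnP ex_diff) => m /andP[m_lt differ] minimal.
exists m => //; apply: bitc_orbits_differ differ => l lm.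
apply/eqP; apply: contraT => ldiff.
by have := minimal l; rewrite (ltn_trans lm m_lt) ldiff => /(_ isT); lia.
Qed.

End SingleF.

(** * Updating F_2k on a moving set of cells *)

Section MaskedUpdate.
Variable K : nat.
Local Notation A := (alphA K).

Definition masked_step (u : nat -> bool) (a : config A) : config A :=
  fun i => if u i then F2k_loc (a i) (a i.+1) else a i.

(* Since [rhob b x = 2] iff [x = 1], whether cell [i] held a 1 before the step can
   be read off its new value; this is what makes the step invertible. *)
Definition old_is1 (u : nat -> bool) (e : config A) i j : bool :=
  if u i then nat_of_ord (e i j) == 2 else is1 (e i j).

Definition masked_unstep (u : nat -> bool) (e : config A) : config A :=
  fun i => if u i then [ffun j => rhob_inv (old_is1 u e i.+1 j) (e i j)] else e i.

Lemma old_is1_step u a i j : old_is1 u (masked_step u a) i j = is1 (a i j).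
Proof. by rewrite /old_is1 /masked_step; case: (u i); rewrite ?ffunE ?rhob_eq2. Qed.

Lemma is1_unstep u e i j : is1 (masked_unstep u e i j) = old_is1 u e i j.
Proof.
rewrite /old_is1 /masked_unstep; case: (u i); rewrite ?ffunE //.
by rewrite -(rhob_eq2 (old_is1 u e i.+1 j)) rhob_invK.
Qed.

Lemma masked_stepK u : cancel (masked_step u) (masked_unstep u).
Proof.
move=> a; apply: functional_extensionality => i; rewrite /masked_unstep.
case ui: (u i); last by rewrite /masked_step ui.
by apply/ffunP => j; rewrite ffunE old_is1_step /masked_step ui ffunE rhobK.
Qed.

Lemma masked_unstepK u : cancel (masked_unstep u) (masked_step u).
Proof.
move=> e; apply: functional_extensionality => i; rewrite /masked_step.
case ui: (u i); last by rewrite /masked_unstep ui.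
apply/ffunP => j; rewrite ffunE /F_loc rhoE is1_unstep.
by rewrite /masked_unstep ui ffunE rhob_invK.
Qed.

Lemma masked_unstep_local u u' e e' i :
  (forall x, i <= x <= i.+1 -> u x = u' x /\ e x = e' x) ->
  masked_unstep u e i = masked_unstep u' e' i.
Proof.
move=> agree; have [ui ei] := agree i ltac:(lia); have [ui1 ei1] := agree i.+1 ltac:(lia).
by rewrite /masked_unstep /old_is1 ui ui1 ei ei1.
Qed.

Fixpoint masked_iter (u : nat -> nat -> bool) t (a : config A) : config A :=
  if t is t'.+1 then masked_step (u t') (masked_iter u t' a) else a.

Fixpoint masked_uniter (u : nat -> nat -> bool) t (e : config A) : config A :=
  if t is t'.+1 then masked_uniter u t' (masked_unstep (u t') e) else e.

Lemma masked_iterK u t : cancel (masked_iter u t) (masked_uniter u t).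
Proof. by elim: t => [|t IH] a //=; rewrite masked_stepK IH. Qed.

Lemma masked_uniterK u t : cancel (masked_uniter u t) (masked_iter u t).
Proof. by elim: t => [|t IH] e //=; rewrite IH masked_unstepK. Qed.

Lemma masked_uniter_local u u' t e e' i :
  (forall s x, s < t -> i <= x <= i + t -> u s x = u' s x) ->
  (forall x, i <= x <= i + t -> e x = e' x) ->
  masked_uniter u t e i = masked_uniter u' t e' i.
Proof.
elim: t e e' => [|t IH] e e' u_agree e_agree /=; first by apply: e_agree; lia.
apply: IH => [s x st xi | x xi]; first by apply: u_agree; lia.
by apply: masked_unstep_local => y yx; split; [apply: u_agree | apply: e_agree]; lia.
Qed.

Lemma masked_iter_all (u : nat -> nat -> bool) t a : (forall s i, u s i) ->
  masked_iter u t a = iter t (ca_global (@F2k_loc K)) a.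
Proof.
move=> u_true; elim: t => [|t IH] //=; rewrite IH.
by apply: functional_extensionality => i; rewrite /masked_step u_true.
Qed.

Lemma iter_F2k_coord t a i j :
  iter t (ca_global (@F2k_loc K)) a i j = iter t (ca_global F_loc) (fun x => a x j) i.
Proof. by elim: t i => [|t IH] i //; rewrite !iter_ca_succ ffunE !IH. Qed.

End MaskedUpdate.

(** * The automata calF and calG *)

Section SkewProduct.
Variables (B : finType) (Hl : B -> B -> B) (q : B) (K : nat).
Hypothesis Hspread : spreading Hl q.
Local Notation H := (ca_global Hl).
Local Notation A := (alphA K).
Local Notation calF := (ca_global (@calF_loc B Hl q K)).
Local Notation calG := (ca_global (@calG_loc B Hl K)).

Definition active (b : config B) t i : bool := iter t.+1 H b i != q.

Lemma iter_calG t c i : iter t calG c i = ((c i).1, iter t H (fun x => (c x).2) i).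
Proof. by elim: t i => [|t IH] i; [rewrite /=; case: (c i) | rewrite !iter_ca_succ !IH]. Qed.

Lemma iter_calF t c i : iter t calF c i =
  (masked_iter (active (fun x => (c x).2)) t (fun x => (c x).1) i, iter t H (fun x => (c x).2) i).
Proof.
elim: t i => [|t IH] i; first by rewrite /=; case: (c i).
rewrite !iter_ca_succ !IH /calF_loc /= /masked_step /active iter_ca_succ.
by case: eqP.
Qed.

Lemma calF_frozen x : (forall i, (x i).2 = q) -> calF x = x.
Proof.
move=> xq; apply: functional_extensionality => i.
rewrite /ca_global /calF_loc !xq (Hspread (or_introl erefl)) eqxx -(xq i).
by case: (x i).
Qed.

Section Nilpotent.
Variable N0 : nat.
Hypothesis HN0 : forall c i, iter N0 H c i = q.

Lemma iter_calF_stable t c : iter (N0 + t) calF c = iter N0 calF c.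
Proof.
elim: t => [|t IH]; first by rewrite addn0.
by rewrite addnS iterS IH calF_frozen // => i; rewrite iter_calF /= HN0.
Qed.

Definition conjugacy (c : config (A * B)) : config (A * B) :=
  fun i => ((iter N0 calF c i).1, (c i).2).

Definition conjugacy_inv (d : config (A * B)) : config (A * B) :=
  fun i => (masked_uniter (active (fun x => (d x).2)) N0 (fun x => (d x).1) i, (d i).2).

Lemma conjugacy_continuous : continuous_cfg conjugacy.
Proof.
move=> c n; exists (n + N0.+1) => d dc i i_lt; rewrite /conjugacy dc; last by lia.
by rewrite (@iter_ca_local _ _ N0 d c) // => x xi; apply: dc; lia.
Qed.

Lemma conjugacy_inv_continuous : continuous_cfg conjugacy_inv.
Proof.
move=> c n; exists (n + N0.*2.+1) => d dc i i_lt; rewrite /conjugacy_inv dc; last by lia.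
congr pair; apply: masked_uniter_local => [s x s_lt xi | x xi]; last by rewrite dc //; lia.
by rewrite /active (@iter_ca_local _ _ s.+1 _ (fun x => (c x).2)) // => y yx; rewrite dc //; lia.
Qed.

Lemma conjugacyK c i : conjugacy_inv (conjugacy c) i = c i.
Proof.
rewrite /conjugacy_inv /=.
have -> : (fun x => (conjugacy c x).1) =
    masked_iter (active (fun x => (c x).2)) N0 (fun x => (c x).1).
  by apply: functional_extensionality => x; rewrite /conjugacy iter_calF.
by rewrite masked_iterK; case: (c i).
Qed.

Lemma conjugacy_invK d i : conjugacy (conjugacy_inv d) i = d i.
Proof. by rewrite /conjugacy iter_calF /= masked_uniterK; case: (d i). Qed.

Lemma conjugacy_calF c i : conjugacy (calF c) i = calG (conjugacy c) i.
Proof.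
rewrite /conjugacy /ca_global /calG_loc /= -iterSr -addn1 iter_calF_stable.
by rewrite /calF_loc; case: eqP.
Qed.

Lemma conjugacy_shift c i : conjugacy (shift c) i = shift (conjugacy c) i.
Proof. by rewrite /conjugacy /shift iter_ca_shift. Qed.

Lemma calF_calG_strongly_conjugate : strongly_conjugate calF calG.
Proof.
exists conjugacy, conjugacy_inv; do !split.
- exact: conjugacy_continuous.
- exact: conjugacy_inv_continuous.
- exact: conjugacyK.
- exact: conjugacy_invK.
- exact: conjugacy_calF.
- exact: conjugacy_shift.
Qed.

Lemma calF_entropy0 : has_entropy calF 0.
Proof.
apply: (ca_has_entropy0 ([ffun=> ord0], q) (N0 := N0)) => c t i.
by rewrite iter_calF_stable.
Qed.

Lemma calG_entropy0 : has_entropy calG 0.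
Proof.
apply: (ca_has_entropy0 ([ffun=> ord0], q) (N0 := N0)) => c t i.
by rewrite !iter_calG HN0 (iter_ca_spreading_mono Hspread (leq_addr t N0)) ?HN0.
Qed.

End Nilpotent.

Lemma n_patterns_calG_le k n : n_patterns calG k n <= #|A| ^ k * n_patterns H k n.
Proof.
rewrite -card_tuple -cardsT -cardsX.
apply: (n_patterns_le_card
  (g := fun w : k.-tuple A * {ffun 'I_n * 'I_k -> B} => [ffun x => (tnth w.1 x.2, w.2 x)])) => c.
exists ([tuple (c j).1 | j < k], orbit_pattern H k n (fun x => (c x).2)).
  by apply/setXP; split; [rewrite inE | apply/mem_orbit_patterns; exists (fun x => (c x).2)].
by apply/ffunP => -[t i]; rewrite !ffunE iter_calG tnth_mktuple.
Qed.

Lemma n_patterns_calF_ge (b : config B) : (forall s j, iter s H b j <> q) ->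
  forall n, (2 ^ K) ^ n.+1 <= n_patterns calF 1 n.+1.
Proof.
move=> b_avoid n; set J := n./2.+1.
pose ce (e : {ffun 'I_(2 * K) -> J.-tuple bool}) : config (A * B) :=
  fun i => ([ffun j => bitc (e j) i], b i).
have coord e j t : (iter t calF (ce e) 0).1 j = iter t (ca_global F_loc) (bitc (e j)) 0.
  rewrite iter_calF /= masked_iter_all => [|s i]; last exact/eqP/b_avoid.
  by rewrite iter_F2k_coord; apply: iter_ca_local => x _; rewrite ffunE.
apply: (@leq_trans #|{ffun 'I_(2 * K) -> J.-tuple bool}|).
  rewrite card_ffun card_tuple card_bool card_ord -!expnM leq_pexp2l //.
  by have := odd_double_half n; rewrite /J -muln2; case: (odd n) => /=; nia.
apply: (card_le_n_patterns (g := fun e => orbit_pattern calF 1 n.+1 (ce e))) => [e e' same | e].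
  apply/ffunP => j; apply/eqP; apply: contraT => differ.
  have [m m_lt] := bitc_tuples_orbits_differ differ.
  have m2_lt : m.*2 < n.+1 by rewrite ltnS -geq_half_double -ltnS.
  have := congr1 (fun f : {ffun 'I_n.+1 * 'I_1 -> A * B} => (f (Ordinal m2_lt, ord0)).1 j) same.
  by rewrite !ffunE /= !coord => ->; rewrite eqxx.
by exists (ce e).
Qed.

Local Open Scope R_scope.

Lemma calG_entropy_le hG : has_entropy calG hG -> hG <= log2 (INR #|B|).
Proof.
move=> hG_ent; apply: (has_entropy_le ([ffun=> ord0], q) hG_ent) => k.
exists (#|A| ^ k * #|B| ^ k)%N => n; rewrite -mulnA.
by apply: leq_trans (n_patterns_calG_le k n) _; rewrite leq_mul2l (n_patterns_ca_le _ q) orbT.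
Qed.

Lemma calF_entropy_ge (b : config B) hF : (forall s j, iter s H b j <> q) ->
  has_entropy calF hF -> INR K <= hF.
Proof.
move=> b_avoid hF_ent.
have := has_entropy_ge (k := 1) (expn_gt0 2 K) hF_ent (n_patterns_calF_ge b_avoid).
by rewrite INR_expn log2_pow ?log2_2 ?Rmult_1_r //; apply: lt_0_INR; apply/ltP.
Qed.

Lemma calF_entropy_gt_calG : log2 (INR #|B|) < INR K -> ~ nilpotent H ->
  exists hF hG, has_entropy calF hF /\ has_entropy calG hG /\ hG < hF.
Proof.
move=> K_gt not_nil; have [b b_avoid] := not_nilpotent_avoiding_orbit Hspread not_nil.
have [hF hF_ent] := ca_has_entropy (@calF_loc B Hl q K) ([ffun=> ord0], q).
have [hG hG_ent] := ca_has_entropy (@calG_loc B Hl K) ([ffun=> ord0], q).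
exists hF, hG; do !split => //.
have := calG_entropy_le hG_ent; have := calF_entropy_ge b_avoid hF_ent; lra.
Qed.

End SkewProduct.

Theorem mainTheorem2 (B : finType) (Hl : B -> B -> B) (q : B) (k : nat)
  (Hspread : spreading Hl q)
  (Hk : Rlt (log2 (INR #|B|)) (INR k)) :
  (~ nilpotent (ca_global Hl) ->
     exists hF hG : R,
       has_entropy (ca_global (@calF_loc B Hl q k)) hF /\
       has_entropy (ca_global (@calG_loc B Hl k)) hG /\ Rlt hG hF) /\
  (nilpotent (ca_global Hl) ->
     strongly_conjugate (ca_global (@calF_loc B Hl q k)) (ca_global (@calG_loc B Hl k)) /\
     has_entropy (ca_global (@calF_loc B Hl q k)) 0 /\
     has_entropy (ca_global (@calG_loc B Hl k)) 0).
Proof.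
split; first exact: calF_entropy_gt_calG.
move=> /(nilpotent_uniform Hspread) [N0 HN0].
split; first exact: calF_calG_strongly_conjugate HN0.
by split; [apply: calF_entropy0 HN0 | apply: calG_entropy0 HN0].
Qed.
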